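(* Let $n\ge2$, $r\ge1$, let $V_1,\dots,V_r\in\mathrm{Mat}(n,\mathbb{C})$ satisfy $\operatorname{tr}(V_s^*V_m)=\delta_{sm}$, and define $$P_{\mathcal T}=\sum_{s=1}^r\sum_{a,b,c,d=1}^n (V_s)_{ab}(\bar V_s)_{cd}\,E^{(n)}_{ac}\otimes E^{(n)}_{bd},\qquad A_{\mathcal T}=\sum_{s,m=1}^r E^{(r)}_{sm}\otimes\Big(\sum_{i=1}^r V_i\bar V_sV_m^tV_i^*\Big).$$ For $A\in\mathrm{Mat}(rn,\mathbb{C})$ and a positive integer $k$ let $$G[A;k]=\big(k-rn+\operatorname{tr}A\big)^2-k\big(k-rn+\operatorname{tr}A^2\big).$$ If, for some real $Q>0$, $P_{\mathcal T}$ is a solution of $P^*=P$, $P^2=P$, $Q^2(P_1P_2P_1-P_2P_1P_2)=P_1-P_2$ (with $P_1=P_{\mathcal T}\otimes I_n$, $P_2=I_n\otimes P_{\mathcal T}$), then there exists a positive integer $k$ such that $G[A_{\mathcal T};k]=0$.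
   Context: $E^{(p)}_{ab}\in\mathrm{Mat}(p,\mathbb{C})$ is the matrix unit with $(E^{(p)}_{ab})_{ij}=\delta_{ai}\delta_{bj}$; $\bar V$ is entrywise complex conjugate, $V^t$ transpose, $V^*$ conjugate transpose; $\otimes$ is the Kronecker product. *)

(* complex numbers are R[i] (mathcomp-real-closed complex) over
   R : realType (MathComp-Analysis' real numbers), Kronecker product is
   mathcomp-real-closed's tensmx (standard index convention (i,j) |-> i*n+j). *)
From HB Require Import structures.
From mathcomp Require Import all_boot all_order all_algebra.
From mathcomp Require Import reals.
From mathcomp Require Import complex mxtens.
Set Implicit Arguments. Unset Strict Implicit. Unset Printing Implicit Defensive.
Import Order.TTheory GRing.Theory Num.Theory.
Local Open Scope ring_scope.
Local Open Scope complex_scope.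

Definition mxconj (R : realType) m n (A : 'M[R[i]]_(m, n)) : 'M[R[i]]_(m, n) :=
  map_mx (fun z => z^*) A.
Definition mxadj (R : realType) m n (A : 'M[R[i]]_(m, n)) : 'M[R[i]]_(n, m) :=
  (mxconj A)^T.

Definition Eunit {R : realType} {p} (a b : 'I_p) : 'M[R[i]]_p := delta_mx a b.

Definition PT (R : realType) n r (V : 'I_r -> 'M[R[i]]_n) : 'M[R[i]]_(n * n) :=
  \sum_(s < r) \sum_(a < n) \sum_(b < n) \sum_(c < n) \sum_(d < n)
     (V s a b * (V s c d)^*) *: (Eunit a c *t Eunit b d).

Definition AT (R : realType) n r (V : 'I_r -> 'M[R[i]]_n) : 'M[R[i]]_(r * n) :=
  \sum_(s < r) \sum_(m < r)
    (Eunit s m *t (\sum_(i0 < r) V i0 *m mxconj (V s) *m (V m)^T *m mxadj (V i0))).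

Definition Gfun (R : realType) N (A : 'M[R[i]]_N) (k : nat) : R[i] :=
  (k%:R - N%:R + \tr A) ^+ 2 - k%:R * (k%:R - N%:R + \tr (A *m A)).

Definition P1of (R : realType) n (P : 'M[R[i]]_(n * n)) : 'M[R[i]]_(n * n * n) :=
  P *t (1%:M : 'M[R[i]]_n).
Definition P2of (R : realType) n (P : 'M[R[i]]_(n * n)) : 'M[R[i]]_(n * n * n) :=
  castmx (mulnA n n n, mulnA n n n) ((1%:M : 'M[R[i]]_n) *t P).

(* The map W : e_s (x) e_c |-> e_c (x) vec(V_s) is an isometry, since its
   Gram matrix is (tr (V_s^* V_m))_{s,m} (x) I = I; its range projection is
   W W^* = I (x) P_T = P2, and it compresses P1 to W^* P1 W = A_T.  Sandwiching
   Q^2 (P1 P2 P1 - P2 P1 P2) = P1 - P2 between W^* and W gives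
   Q^2 (A_T^2 - A_T) = A_T - 1, so Y = 1 - A_T satisfies Y^2 = (1 - Q^-2) Y and
   tr Y = (1 - Q^-2) rank Y.  Substituting the traces of A_T and A_T^2 yields
   G[A_T; k] = (1 - Q^-2)^2 f (f - k) with f = rank (1 - A_T), so k = f works
   (k = 1 if f = 0). *)

From HB Require Import structures.
From mathcomp Require Import all_boot all_order all_algebra.
From mathcomp Require Import reals.
From mathcomp Require Import complex mxtens.
From mathcomp Require Import ring.
Set Implicit Arguments. Unset Strict Implicit. Unset Printing Implicit Defensive.
Import Order.TTheory GRing.Theory Num.Theory.
Local Open Scope ring_scope.
Local Open Scope complex_scope.

Lemma big_mxtens_index (R : Type) (idx : R) (op : Monoid.com_law idx) m n
    (F : 'I_(m * n) -> R) :
  \big[op/idx]_(x < m * n) F x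
  = \big[op/idx]_(i < m) \big[op/idx]_(j < n) F (mxtens_index (i, j)).
Proof.
rewrite pair_big (reindex (@mxtens_index m n)) /=; last first.
  by exists (@mxtens_unindex m n) => x _; rewrite (mxtens_indexK, mxtens_unindexK).
by apply: eq_bigr => -[i j].
Qed.

Lemma mxtens_index_eq m n (p q : 'I_m * 'I_n) :
  (mxtens_index p == mxtens_index q) = (p == q).
Proof. exact: (can_eq (@mxtens_indexK m n)). Qed.

Section TensorDelta.
Variable R : pzRingType.

Lemma tens_delta_mx m n p q (i : 'I_m) (j : 'I_n) (k : 'I_p) (l : 'I_q) :
  delta_mx i j *t delta_mx k l
  = delta_mx (mxtens_index (i, k)) (mxtens_index (j, l)) :> 'M[R]_(_, _).
Proof.
apply/matrixP => x y; case: (mxtens_indexP x) => i' k'; case: (mxtens_indexP y) => j' l'.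
by rewrite tensmxE !mxE !mxtens_index_eq !xpair_eqE -natrM mulnb andbACA.
Qed.

Lemma sum_tens_delta_mxE m n p q (F : 'I_m -> 'I_p -> 'I_n -> 'I_q -> R) a b c d :
  (\sum_i \sum_k \sum_j \sum_l F i k j l *: (delta_mx i j *t delta_mx k l))
    (mxtens_index (a, b)) (mxtens_index (c, d)) = F a b c d.
Proof.
set M := \matrix_(x, y) F (mxtens_unindex x).1 (mxtens_unindex x).2
                            (mxtens_unindex y).1 (mxtens_unindex y).2.
suff -> : \sum_i \sum_k \sum_j \sum_l F i k j l *: (delta_mx i j *t delta_mx k l) = M.
  by rewrite mxE !mxtens_indexK.
rewrite [RHS]matrix_sum_delta big_mxtens_index; apply: eq_bigr => i _.
apply: eq_bigr => k _; rewrite big_mxtens_index; apply: eq_bigr => j _.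
by apply: eq_bigr => l _; rewrite tens_delta_mx mxE !mxtens_indexK.
Qed.

Lemma sum_delta_tens_mxE m n p q (B : 'I_m -> 'I_n -> 'M[R]_(p, q)) s c t d :
  (\sum_i \sum_j delta_mx i j *t B i j) (mxtens_index (s, c)) (mxtens_index (t, d))
  = B s t c d.
Proof.
rewrite summxE (big_only1 s) //= => [|i si _]; rewrite summxE.
  rewrite (big_only1 t) //= => [|j tj _]; first by rewrite tensmxE !mxE !eqxx mul1r.
  by rewrite tensmxE !mxE eqxx eq_sym (negbTE tj) andbF mul0r.
by apply: big1 => j _; rewrite tensmxE !mxE eq_sym (negbTE si) mul0r.
Qed.

End TensorDelta.

Lemma compressed_relation (R : comPzRingType) N m (u : R)
    (P1 P2 : 'M[R]_N) (W : 'M[R]_(N, m)) (Wl : 'M[R]_(m, N)) (A : 'M[R]_m) :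
    Wl *m W = 1%:M -> W *m Wl = P2 -> Wl *m P1 *m W = A ->
  u *: (P1 *m P2 *m P1 - P2 *m P1 *m P2) = P1 - P2 ->
  u *: (A *m A - A) = A - 1%:M.
Proof.
move=> WlW WWl WlP1W rel.
have E121 : Wl *m (P1 *m P2 *m P1) *m W = A *m A by rewrite -WWl -WlP1W !mulmxA.
have E212 : Wl *m (P2 *m P1 *m P2) *m W = A.
  by rewrite -WWl -WlP1W !mulmxA WlW mul1mx -mulmxA WlW mulmx1.
have E2 : Wl *m P2 *m W = 1%:M by rewrite -WWl !mulmxA WlW mul1mx WlW.
have := congr1 (fun M => Wl *m M *m W) rel.
by rewrite /= -scalemxAr -scalemxAl !(mulmxBr, mulmxBl) E121 E212 WlP1W E2.
Qed.

Lemma mxtrace_sqr_scale (F : fieldType) N (Y : 'M[F]_N) c :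
  Y *m Y = c *: Y -> \tr Y = c * (\rank Y)%:R.
Proof.
move=> YY; have := mulmx_base Y.
have := row_free_inj (row_base_free Y); have := row_full_inj (col_base_full Y).
move: (col_base Y) (row_base Y) => Cb Rb injC injR eY.
have RbCb : Rb *m Cb = c *: 1%:M.
  apply: injR; apply: injC.
  by rewrite -scalemxAl mul1mx -scalemxAr eY !mulmxA eY -mulmxA eY.
by rewrite -{1}eY mxtrace_mulC RbCb mxtraceZ mxtrace1.
Qed.

Lemma Gfun_quadratic (R : realType) N (A : 'M[R[i]]_N) (u : R[i]) k :
    u != 0 -> u *: (A *m A - A) = A - 1%:M ->
  Gfun A k = (1 - u^-1) ^+ 2 * (\rank (1%:M - A))%:R
             * ((\rank (1%:M - A))%:R - k%:R).
Proof.
move=> u0 rel.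
have AA : A *m A = A + u^-1 *: (A - 1%:M).
  by rewrite -rel scalerA mulVf // scale1r addrC subrK.
have YY : (1%:M - A) *m (1%:M - A) = (1 - u^-1) *: (1%:M - A).
  rewrite mulmxBl mul1mx mulmxBr mulmx1 AA scalerBl scale1r opprD opprK addKr.
  by congr (_ + _); rewrite -scalerN opprB.
have := mxtrace_sqr_scale YY; rewrite raddfB /= mxtrace1 => trY.
rewrite /Gfun AA mxtraceD mxtraceZ raddfB /= mxtrace1.
have -> : \tr A = N%:R - (1 - u^-1) * (\rank (1%:M - A))%:R.
  by rewrite -trY opprB addrC subrK.
ring.
Qed.

Lemma mxadjE (R : realType) m n (M : 'M[R[i]]_(m, n)) i j : mxadj M i j = (M j i)^*.
Proof. by rewrite !mxE. Qed.

Lemma P1ofE (R : realType) n (P : 'M[R[i]]_(n * n)) x y e e' :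
  P1of P (mxtens_index (x, e)) (mxtens_index (y, e')) = P x y * (e == e')%:R.
Proof. by rewrite tensmxE mxE. Qed.

Lemma P2ofE (R : realType) n (P : 'M[R[i]]_(n * n)) a b e a' b' e' :
  P2of P (mxtens_index (mxtens_index (a, b), e))
         (mxtens_index (mxtens_index (a', b'), e'))
  = (a == a')%:R * P (mxtens_index (b, e)) (mxtens_index (b', e')).
Proof.
have idxA x y z : cast_ord (esym (mulnA n n n)) (mxtens_index (mxtens_index (x, y), z))
                  = mxtens_index (x, mxtens_index (y, z)).
  by apply: val_inj; rewrite /= mulnDl -mulnA addnA.
by rewrite castmxE !idxA tensmxE mxE.
Qed.

Section Isometry.
Variables (R : realType) (n r : nat) (V : 'I_r -> 'M[R[i]]_n).

Lemma PTE a b c d :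
  PT V (mxtens_index (a, b)) (mxtens_index (c, d)) = \sum_s V s a b * (V s c d)^*.
Proof. by rewrite summxE; apply: eq_bigr => s _; rewrite sum_tens_delta_mxE. Qed.

Lemma ATE s c t d :
  AT V (mxtens_index (s, c)) (mxtens_index (t, d))
  = \sum_j \sum_z \sum_y \sum_x V j c x * (V s x y)^* * V t z y * (V j d z)^*.
Proof.
rewrite sum_delta_tens_mxE summxE; apply: eq_bigr => j _.
rewrite mxE; apply: eq_bigr => z _; rewrite !mxE big_distrl; apply: eq_bigr => y _.
by rewrite !mxE !big_distrl; apply: eq_bigr => x _; rewrite !mxE.
Qed.

Definition Viso : 'M[R[i]]_(n * n * n, r * n) :=
  \matrix_(x, y)
    let: (ab, e) := mxtens_unindex x in let: (a, b) := mxtens_unindex ab in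
    let: (s, c) := mxtens_unindex y in (a == c)%:R * V s b e.

Lemma VisoE a b e s c :
  Viso (mxtens_index (mxtens_index (a, b), e)) (mxtens_index (s, c))
  = (a == c)%:R * V s b e.
Proof. by rewrite mxE !mxtens_indexK. Qed.

Lemma Viso_adj_mul :
    (forall s t : 'I_r, \tr (mxadj (V s) *m V t) = (s == t)%:R) ->
  mxadj Viso *m Viso = 1%:M.
Proof.
move=> orth; apply/matrixP => sc td.
case: (mxtens_indexP sc) => s c; case: (mxtens_indexP td) => t d.
rewrite !mxE !big_mxtens_index mxtens_index_eq xpair_eqE.
under eq_bigr do under eq_bigr do under eq_bigr do
  rewrite mxadjE !VisoE rmorphM /= conjc_nat.
rewrite (big_only1 c) // => [|a ac _]; last first.
  by rewrite big1 // => b _; rewrite big1 // => e _; rewrite (negbTE ac) !mul0r.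
rewrite eqxx; have [_|_] := eqVneq c d; last first.
  by rewrite andbF big1 // => b _; rewrite big1 // => e _; rewrite mul0r mulr0.
rewrite andbT -orth /mxtrace exchange_big; apply: eq_bigr => e _.
by rewrite mxE; apply: eq_bigr => b _; rewrite mxadjE !mul1r.
Qed.

Lemma Viso_mul_adj : Viso *m mxadj Viso = P2of (PT V).
Proof.
apply/matrixP => abe abe'.
case: (mxtens_indexP abe) => ab e; case: (mxtens_indexP ab) => a b.
case: (mxtens_indexP abe') => ab' e'; case: (mxtens_indexP ab') => a' b'.
rewrite P2ofE PTE mxE big_mxtens_index exchange_big /=.
under eq_bigr do under eq_bigr do rewrite mxadjE !VisoE rmorphM /= conjc_nat.
rewrite (big_only1 a) // => [|c ca _]; last first.
  by rewrite big1 // => s _; rewrite eq_sym (negbTE ca) !mul0r.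
rewrite mulr_sumr eqxx; apply: eq_bigr => s _.
by rewrite eq_sym mul1r mulrCA.
Qed.

Lemma adj_Viso_P1E s c a b e :
  (mxadj Viso *m P1of (PT V)) (mxtens_index (s, c))
                              (mxtens_index (mxtens_index (a, b), e))
  = \sum_x (V s x e)^* * PT V (mxtens_index (c, x)) (mxtens_index (a, b)).
Proof.
rewrite mxE !big_mxtens_index.
under eq_bigr do under eq_bigr do under eq_bigr do
  rewrite mxadjE VisoE P1ofE rmorphM /= conjc_nat.
rewrite (big_only1 c) // => [|a' ac _]; last first.
  by rewrite big1 // => x _; rewrite big1 // => e' _; rewrite (negbTE ac) !mul0r.
apply: eq_bigr => x _; rewrite (big_only1 e) // => [|e' ee _].
  by rewrite !eqxx mul1r mulr1.
by rewrite (negbTE ee) !mulr0.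
Qed.

Lemma Viso_compress_P1 : mxadj Viso *m P1of (PT V) *m Viso = AT V.
Proof.
apply/matrixP => sc td.
case: (mxtens_indexP sc) => s c; case: (mxtens_indexP td) => t d.
rewrite ATE mxE !big_mxtens_index.
under eq_bigr do under eq_bigr do under eq_bigr do rewrite adj_Viso_P1E VisoE.
rewrite (big_only1 d) // => [|a ad _]; last first.
  by rewrite big1 // => b _; rewrite big1 // => e _; rewrite (negbTE ad) mul0r mulr0.
rewrite [RHS]exchange_big; apply: eq_bigr => b _.
rewrite exchange_big; apply: eq_bigr => e _.
rewrite exchange_big eqxx mul1r big_distrl; apply: eq_bigr => x _.
rewrite PTE big_distrr big_distrl; apply: eq_bigr => j _ /=.
ring.
Qed.

End Isometry.

Unset Implicit Arguments.
Set Strict Implicit.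

Theorem lemma7 (R : realType) (n r : nat) (V : 'I_r -> 'M[R[i]]_n)
  (hn : (2 <= n)%N) (hr : (1 <= r)%N)
  (horth : forall s m : 'I_r,
     \tr (mxadj (V s) *m V m) = (s == m)%:R)
  (Q : R) (hQ : 0 < Q)
  (hsa : mxadj (PT V) = PT V)
  (hid : PT V *m PT V = PT V)
  (hrel : let P1 := P1of (PT V) in let P2 := P2of (PT V) in
     (Q ^+ 2)%:C *: (P1 *m P2 *m P1 - P2 *m P1 *m P2) = P1 - P2) :
  exists k : nat, (0 < k)%N /\ Gfun (AT V) k = 0.
Proof.
have Q2_neq0 : (Q ^+ 2)%:C != 0 by rewrite fmorph_eq0 expf_eq0 gt_eqF.
have rel := compressed_relation (Viso_adj_mul horth) (Viso_mul_adj V)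
                                (Viso_compress_P1 V) hrel.
have G k := Gfun_quadratic k Q2_neq0 rel.
have [f0|f_gt0] := posnP (\rank (1%:M - AT V)).
  by exists 1%N; rewrite G f0 mulr0 mul0r.
by exists (\rank (1%:M - AT V)); rewrite G subrr mulr0.
Qed.
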